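(* Let $X,Y$ be non-commuting indeterminates and $C=XYX^{-1}Y^{-1}$. Let $(R_n)_{n\in\mathbb Z}$ satisfy $$R_{2n}CR_{2n-2}=1+R_{2n-1},\qquad R_{2n+1}CR_{2n-1}=1+R_{2n}^4\qquad(n\in\mathbb Z),$$ with $R_1=YXY^{-1}$ and $R_2=Y$. Then for all $n\ge0$, $R_n$ is a Laurent polynomial in $X,Y$ with only non-negative integer coefficients.
   Context: Work in the free skew field (non-commutative rational functions) over $\mathbb C$ generated by $X,Y$. A Laurent polynomial in $X,Y$ is a $\mathbb Z$-linear combination of words in $X^{\pm1},Y^{\pm1}$. *)

From HB Require Import structures.
From mathcomp Require Import all_boot all_order all_algebra.
Set Implicit Arguments. Unset Strict Implicit. Unset Printing Implicit Defensive.
Import Order.TTheory GRing.Theory Num.Theory.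
Local Open Scope ring_scope.

(* A letter of the alphabet X^{±1}, Y^{±1}:
   (false, false) = X, (false, true) = X^-1, (true, false) = Y, (true, true) = Y^-1. *)
Definition letter := (bool * bool)%type.
Definition word := seq letter.

(* freely reduced words: no factor  a a^{-1}  *)
Fixpoint reduced (w : word) : bool :=
  match w with
  | a :: ((b :: _) as w') => ~~ ((a.1 == b.1) && (a.2 != b.2)) && reduced w'
  | _ => true
  end.

Section Eval.
Variable D : unitRingType.
Variables x y : D.

Definition eval_letter (l : letter) : D :=
  let g := if l.1 then y else x in if l.2 then g^-1 else g.

Definition eval_word (w : word) : D := \prod_(l <- w) eval_letter l.

Definition eval_nlaurent (s : seq (nat * word)) : D :=
  \sum_(p <- s) (p.1)%:R * eval_word p.2.

(* x, y generate a copy of the integral free group ring Z[F_2] inside D: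
   distinct reduced words are Z-linearly independent. *)
Definition free_group_ring_embeds : Prop :=
  forall s : seq (int * word),
    uniq (map snd s) -> all reduced (map snd s) ->
    \sum_(p <- s) (p.1)%:~R * eval_word p.2 = 0 ->
    all (fun p => p.1 == 0) s.
End Eval.

Definition is_division_ring (D : unitRingType) : Prop :=
  forall z : D, z != 0 -> z \is a GRing.unit.

(* The even terms satisfy a linear recurrence R_(2n+4) = kappa R_(2n+2) - C R_(2n) with an explicit
   Laurent polynomial kappa, and the odd terms are R_(2n+1) = R_(2n+2) C R_(2n) - 1.  The two defining
   relations then reduce to a commutation identity and a Casorati-type invariant of the recurrence, both
   proved by induction.  Positivity survives the minus sign: peeling off a leading monomial, the tails
   R_(2n+2) - lead R_(2n), R_(2n+2) - R_(2n) lead_r and R_(2n+1) - lead R_(2n) C R_(2n) obey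
   subtraction-free recurrences.  Finally R is forced to be this sequence: positive Laurent polynomials
   are nonzero because the free group ring embeds, hence invertible in the division ring, so the
   relations can be solved for R_(2n+2) and R_(2n+3). *)

From HB Require Import structures.
From mathcomp Require Import all_boot all_order all_algebra.
From mathcomp Require Import zify.
Set Implicit Arguments. Unset Strict Implicit. Unset Printing Implicit Defensive.
Import Order.TTheory GRing.Theory Num.Theory.
Local Open Scope ring_scope.

(** * Normal forms in the free group ring *)

Section IntegerCombinations.
Variables (T : eqType) (inv : rel T).

Definition zcomb := seq (int * seq T).

Definition push (a : T) (w : seq T) : seq T :=
  if w is b :: w' then (if inv a b then w' else a :: w) else [:: a].

Definition free_red (w : seq T) : seq T := foldr push [::] w.

Fixpoint add_term (c : int) (w : seq T) (p : zcomb) : zcomb :=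
  match p with
  | [::] => if c == 0 then [::] else [:: (c, w)]
  | (d, v) :: p' =>
      if v == w then (if c + d == 0 then p' else (c + d, v) :: p')
      else (d, v) :: add_term c w p'
  end.

Definition normalize (p : zcomb) : zcomb :=
  foldr (fun q r => add_term q.1 (free_red q.2) r) [::] p.

Definition zcomb_opp (p : zcomb) : zcomb := [seq (- q.1, q.2) | q <- p].

Definition zcomb_mul (p q : zcomb) : zcomb :=
  [seq (a.1 * b.1, a.2 ++ b.2) | a <- p, b <- q].

Definition zcomb_exp (p : zcomb) (n : nat) : zcomb :=
  iter n (zcomb_mul p) [:: (1, [::])].

Lemma add_term_subset c w p : {subset map snd (add_term c w p) <= w :: map snd p}.
Proof.
elim: p => [|[d v] p IH] /= u; first by case: eqP.
case: eqP => [->|_].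
  by case: eqP => _ /=; rewrite !inE; [move=> -> | case/orP=> ->]; rewrite ?orbT.
rewrite !inE => /orP [->|/IH]; first by rewrite orbT.
by rewrite inE => /orP [] ->; rewrite ?orbT.
Qed.

Lemma add_term_uniq c w p : uniq (map snd p) -> uniq (map snd (add_term c w p)).
Proof.
elim: p => [|[d v] p IH] /=; first by case: eqP.
case/andP => vp up; case: eqP => [_|vw]; first by case: eqP => //= _; rewrite vp.
rewrite /= IH // andbT; apply/negP => /add_term_subset; rewrite inE.
by case/orP => [/eqP|]; [exact: vw | apply/negP].
Qed.

Lemma add_term_gt0 c w p : 0 <= c -> all (fun q => 0 < q.1) p ->
  all (fun q => 0 < q.1) (add_term c w p).
Proof.
move=> c0; elim: p => [|[d v] p IH] /=.
  by move=> _; case: eqP => //= /eqP c_neq0; rewrite andbT lt_def c_neq0.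
case/andP => d0 p0; case: eqP => _; last by rewrite /= d0 IH.
by case: eqP => _ //=; rewrite p0 andbT ltr_wpDl.
Qed.

Lemma add_term_neq_nil c w p : 0 <= c -> all (fun q => 0 < q.1) p ->
  (0 < c) || (p != [::]) -> add_term c w p != [::].
Proof.
move=> c0; case: p => [|[d v] p] /=; first by rewrite orbF => _ c_gt0; rewrite (gt_eqF c_gt0).
case/andP => d0 _ _; case: (v =P w) => _ //.
by rewrite (gt_eqF (ltr_wpDl c0 d0)).
Qed.

Lemma normalize_uniq p : uniq (map snd (normalize p)).
Proof. by elim: p => //= q p IH; exact: add_term_uniq. Qed.

Lemma normalize_gt0 p : all (fun q => 0 <= q.1) p -> all (fun q => 0 < q.1) (normalize p).
Proof. by elim: p => //= q p IH /andP [q0 p0]; apply: add_term_gt0 => //; exact: IH. Qed.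

Lemma normalize_neq_nil p : all (fun q => 0 <= q.1) p -> has (fun q => 0 < q.1) p ->
  normalize p != [::].
Proof.
elim: p => //= q p IH /andP [q0 p0] hp.
apply: add_term_neq_nil => //; first exact: normalize_gt0.
by case/orP: hp => [->|/(IH p0) ->]; rewrite ?orbT.
Qed.

Section Evaluation.
Variables (D : unitRingType) (ev : T -> D).
Hypothesis ev_inv : forall a b, inv a b -> ev a * ev b = 1.

Definition evw (w : seq T) : D := \prod_(a <- w) ev a.
Definition evz (p : zcomb) : D := \sum_(q <- p) q.1%:~R * evw q.2.

Lemma evw_push a w : evw (push a w) = ev a * evw w.
Proof.
case: w => [|b w] /=; first by rewrite /evw big_seq1 big_nil mulr1.
by case: ifP => [/ev_inv h|_]; rewrite /evw !big_cons // mulrA h mul1r.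
Qed.

Lemma evw_free_red w : evw (free_red w) = evw w.
Proof. by elim: w => [|a w IH] //=; rewrite evw_push IH /evw big_cons. Qed.

Lemma evz_add_term c w p : evz (add_term c w p) = c%:~R * evw w + evz p.
Proof.
rewrite /evz; elim: p => [|[d v] p IH] /=.
  by case: eqP => [->|_]; rewrite ?big_seq1 big_nil ?mul0r addr0.
case: eqP => [->|_]; last by rewrite !big_cons IH addrCA.
case: eqP => [cd0|_]; rewrite !big_cons addrA -mulrDl -intrD //.
by rewrite cd0 mul0r add0r.
Qed.

Lemma evz_normalize p : evz (normalize p) = evz p.
Proof.
elim: p => [|q p IH] //=.
by rewrite evz_add_term IH evw_free_red /evz big_cons.
Qed.

Lemma evz_cat p q : evz (p ++ q) = evz p + evz q.
Proof. exact: big_cat. Qed.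

Lemma evz_opp p : evz (zcomb_opp p) = - evz p.
Proof. by rewrite /evz big_map -sumrN; apply: eq_bigr => q _; rewrite intrN mulNr. Qed.

Lemma evz_mul p q : evz (zcomb_mul p q) = evz p * evz q.
Proof.
rewrite /evz big_allpairs_dep mulr_suml; apply: eq_bigr => u _.
rewrite mulr_sumr; apply: eq_bigr => v _ /=.
rewrite /evw big_cat intrM -!mulrA; congr (_ * _).
by rewrite !mulrA (commr_int (\prod_(i <- u.2) ev i) v.1).
Qed.

Lemma evz_exp p n : evz (zcomb_exp p n) = evz p ^+ n.
Proof.
elim: n => [|n IH]; first by rewrite /evz big_seq1 /evw big_nil mulr1.
by rewrite /zcomb_exp iterS evz_mul -/(zcomb_exp p n) IH exprS.
Qed.

End Evaluation.
End IntegerCombinations.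

Definition letter_inv (a b : letter) : bool := (a.1 == b.1) && (a.2 != b.2).

Lemma reduced_push a w : reduced w -> reduced (push letter_inv a w).
Proof.
case: w => [|b w] //= w_red; case: ifP => [_|/negbT ab]; last by rewrite /= ab.
by case: w w_red => //= c w /andP [].
Qed.

Lemma reduced_free_red w : reduced (free_red letter_inv w).
Proof. by elim: w => //= a w IH; exact: reduced_push. Qed.

Lemma normalize_reduced (p : zcomb letter) : all reduced (map snd (normalize letter_inv p)).
Proof.
elim: p => //= q p IH; apply/allP => w /add_term_subset; rewrite inE.
by case/orP => [/eqP ->|/(allP IH)]; rewrite ?reduced_free_red.
Qed.

Lemma eval_letter_inv (D : unitRingType) (x y : D) :
  x \is a GRing.unit -> y \is a GRing.unit ->
  forall a b, letter_inv a b -> eval_letter x y a * eval_letter x y b = 1.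
Proof.
move=> xu yu [a1 a2] [b1 b2] /andP [/= /eqP <- /negPf].
have gu : (if a1 then y else x) \is a GRing.unit by case: a1.
by rewrite /eval_letter /=; case: a2; case: b2 => //= _; rewrite ?mulrV ?mulVr.
Qed.

Inductive expr :=
| EAdd of expr & expr | EOpp of expr | EMul of expr & expr | EExp of expr & nat
| EOne | EZero | ELetter of letter | EAtom of nat.

(* [inr i] is the [i]-th atom of an environment: a subterm that is neither a ring operation nor
   a generator. *)
Definition symbol := (letter + nat)%type.

Definition symbol_inv (a b : symbol) : bool :=
  if (a, b) is (inl l, inl l') then letter_inv l l' else false.

Fixpoint to_zcomb (e : expr) : zcomb symbol :=
  match e with
  | EAdd a b => to_zcomb a ++ to_zcomb b
  | EOpp a => zcomb_opp (to_zcomb a)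
  | EMul a b => zcomb_mul (to_zcomb a) (to_zcomb b)
  | EExp a n => zcomb_exp (to_zcomb a) n
  | EOne => [:: (1, [::])]
  | EZero => [::]
  | ELetter l => [:: (1, [:: inl l])]
  | EAtom i => [:: (1, [:: inr i])]
  end.

Section Reflection.
Variables (D : unitRingType) (x y : D) (env : seq D).
Hypotheses (xu : x \is a GRing.unit) (yu : y \is a GRing.unit).

Definition eval_symbol (a : symbol) : D :=
  match a with inl l => eval_letter x y l | inr i => nth 0 env i end.

Fixpoint eval_expr (e : expr) : D :=
  match e with
  | EAdd a b => eval_expr a + eval_expr b
  | EOpp a => - eval_expr a
  | EMul a b => eval_expr a * eval_expr b
  | EExp a n => eval_expr a ^+ n
  | EOne => 1
  | EZero => 0
  | ELetter l => eval_letter x y l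
  | EAtom i => nth 0 env i
  end.

Lemma eval_symbol_inv a b : symbol_inv a b -> eval_symbol a * eval_symbol b = 1.
Proof. by case: a b => [a|i] [b|j] //; exact: eval_letter_inv. Qed.

Lemma evz_to_zcomb e : evz eval_symbol (to_zcomb e) = eval_expr e.
Proof.
have ev1 a : evz eval_symbol [:: (1, [:: a])] = eval_symbol a.
  by rewrite /evz /evw !big_seq1 mul1r.
elim: e => [a IHa b IHb|a IHa|a IHa b IHb|a IHa n| | |l|i] /=.
- by rewrite evz_cat IHa IHb.
- by rewrite evz_opp IHa.
- by rewrite evz_mul IHa IHb.
- by rewrite evz_exp IHa.
- by rewrite /evz /evw big_seq1 big_nil mulr1.
- by rewrite /evz big_nil.
- exact: ev1.
- exact: ev1.
Qed.

Lemma eval_expr_eq e1 e2 :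
  normalize symbol_inv (to_zcomb e1 ++ zcomb_opp (to_zcomb e2)) == [::] ->
  eval_expr e1 = eval_expr e2.
Proof.
move=> /eqP p0; apply/eqP; rewrite -subr_eq0 -!evz_to_zcomb -evz_opp -evz_cat.
by rewrite -(evz_normalize eval_symbol_inv) p0 /evz big_nil.
Qed.

End Reflection.

Ltac append_atom l t :=
  lazymatch l with
  | nil => constr:(t :: nil)
  | ?h :: ?tl => let r := append_atom tl t in constr:(h :: r)
  end.

Ltac find_atom t env n :=
  lazymatch env with
  | nil => constr:((n, false))
  | t :: _ => constr:((n, true))
  | _ :: ?tl => find_atom t tl (S n)
  end.

Ltac reify x y t env :=
  lazymatch t with
  | (?a + ?b)%R =>
      lazymatch reify x y a env with (?ea, ?env1) =>
      lazymatch reify x y b env1 with (?eb, ?env2) => constr:((EAdd ea eb, env2)) end end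
  | (- ?a)%R =>
      lazymatch reify x y a env with (?ea, ?env1) => constr:((EOpp ea, env1)) end
  | (?a * ?b)%R =>
      lazymatch reify x y a env with (?ea, ?env1) =>
      lazymatch reify x y b env1 with (?eb, ?env2) => constr:((EMul ea eb, env2)) end end
  | (?a ^+ ?n)%R =>
      lazymatch reify x y a env with (?ea, ?env1) => constr:((EExp ea n, env1)) end
  | 1%R => constr:((EOne, env))
  | 0%R => constr:((EZero, env))
  | x => constr:((ELetter (false, false), env))
  | y => constr:((ELetter (true, false), env))
  | (x^-1)%R => constr:((ELetter (false, true), env))
  | (y^-1)%R => constr:((ELetter (true, true), env))
  | _ =>
      lazymatch find_atom t env 0%N with
      | (?i, true) => constr:((EAtom i, env))
      | (?i, false) => let env' := append_atom env t in constr:((EAtom i, env'))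
      end
  end.

(* Proves identities built from ring operations, [x], [y], their inverses and arbitrary atoms that hold in
   the free group ring, i.e. in every ring where [x] and [y] are units. *)
Ltac free_group_ring x y xu yu :=
  lazymatch goal with |- ?L = ?R =>
    let T := type of L in
    lazymatch reify x y L (@nil T) with (?e1, ?env1) =>
    lazymatch reify x y R env1 with (?e2, ?env) =>
      change (eval_expr x y env e1 = eval_expr x y env e2);
      apply: (eval_expr_eq env xu yu); vm_compute; reflexivity
    end end
  end.

(** * Laurent polynomials with nonnegative coefficients *)

Section PositiveLaurent.
Variables (D : unitRingType) (x y : D).

Definition pos_laurent (a : D) : Prop :=
  exists s : seq (nat * word), a = eval_nlaurent x y s /\ has (fun p => 0 < p.1)%N s.

Lemma pos_laurentD a b : pos_laurent a -> pos_laurent b -> pos_laurent (a + b).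
Proof.
move=> [s [-> s_pos]] [t [-> t_pos]]; exists (s ++ t).
by rewrite /eval_nlaurent big_cat has_cat s_pos.
Qed.

Lemma pos_laurentM a b : pos_laurent a -> pos_laurent b -> pos_laurent (a * b).
Proof.
move=> [s [-> /hasP [p ps p_gt0]]] [t [-> /hasP [q qt q_gt0]]].
exists [seq ((p.1 * q.1)%N, p.2 ++ q.2) | p <- s, q <- t]; split.
  rewrite /eval_nlaurent big_allpairs_dep mulr_suml; apply: eq_bigr => u _.
  rewrite mulr_sumr; apply: eq_bigr => v _ /=.
  rewrite /eval_word big_cat natrM -!mulrA; congr (_ * _).
  by rewrite !mulrA (commr_nat (\prod_(l <- u.2) eval_letter x y l) v.1).
apply/hasP; exists ((p.1 * q.1)%N, p.2 ++ q.2); last by rewrite /= muln_gt0 p_gt0.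
by apply/allpairsP; exists (p, q).
Qed.

Lemma pos_laurent_letter l : pos_laurent (eval_letter x y l).
Proof.
exists [:: (1%N, [:: l])]; split => //.
by rewrite /eval_nlaurent /eval_word !big_seq1 mul1r.
Qed.

Lemma pos_laurent_x : pos_laurent x. Proof. exact: (pos_laurent_letter (false, false)). Qed.
Lemma pos_laurent_y : pos_laurent y. Proof. exact: (pos_laurent_letter (true, false)). Qed.
Lemma pos_laurent_xV : pos_laurent x^-1. Proof. exact: (pos_laurent_letter (false, true)). Qed.
Lemma pos_laurent_yV : pos_laurent y^-1. Proof. exact: (pos_laurent_letter (true, true)). Qed.

Hypothesis embeds : free_group_ring_embeds x y.

Lemma eval_letter_neq0 l : eval_letter x y l != 0.
Proof.
apply/eqP => l0; have := @embeds [:: (1, [:: l])].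
by rewrite /= big_seq1 /eval_word big_seq1 l0 mulr0 => /(_ erefl erefl erefl).
Qed.

Hypotheses (xu : x \is a GRing.unit) (yu : y \is a GRing.unit).

(* Collecting terms cannot cancel nonnegative coefficients, so a positive combination normalizes to a
   nonempty linear dependence among distinct reduced words. *)
Lemma pos_laurent_neq0 a : pos_laurent a -> a != 0.
Proof.
move=> [s [-> s_pos]]; apply/eqP => s0.
pose p : zcomb letter := [seq (Posz q.1, q.2) | q <- s].
have p_ge0 : all (fun q => 0 <= q.1) p by apply/allP => q /mapP [? _ ->].
have p_pos : has (fun q => 0 < q.1) p by rewrite has_map.
have evz_p : evz (eval_letter x y) p = eval_nlaurent x y s by rewrite /evz big_map.
have evz_norm0 : evz (eval_letter x y) (normalize letter_inv p) = 0.
  by rewrite (evz_normalize (eval_letter_inv xu yu)) evz_p.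
have := embeds (normalize_uniq letter_inv p) (normalize_reduced p) evz_norm0.
move: (normalize_gt0 letter_inv p_ge0) (normalize_neq_nil letter_inv p_ge0 p_pos).
by case: normalize => // q n /= /andP [q_gt0 _] _ /andP [/eqP q0]; rewrite q0 in q_gt0.
Qed.

End PositiveLaurent.

(** * The even and odd subsequences *)

Lemma eq_by_difference (V : zmodType) (a b d : V) : a - b = d -> d = 0 -> a = b.
Proof. by move=> ab_d d0; apply/eqP; rewrite -subr_eq0 ab_d d0. Qed.

Section Recurrence.
Variables (D : unitRingType) (x y : D).
Hypotheses (xu : x \is a GRing.unit) (yu : y \is a GRing.unit).

Definition comm := x * y * x^-1 * y^-1.
Definition comm_inv := y * x * y^-1 * x^-1.

Definition lead := y * y * y * x^-1 * y^-1.
Definition sigma := x * y^-1 * x^-1 * y^-1 + y^-1 * x^-1 * y^-1 + y^-1 * y^-1.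
Definition kappa_l := sigma + x * y^-1 * y^-1.
Definition kappa := lead + kappa_l.

(* The right-handed recurrence is [Re n.+2 = Re n.+1 * (kappa * comm_inv) - Re n * comm_inv], and
   [kappa * comm_inv = lead_r + kappa_r]. *)
Definition lead_r := y * y * x^-1.
Definition sigma_r := y^-1 * y^-1 * x^-1 + y^-1 * x * y^-1 * x^-1 + x * y^-1 * y^-1 * x^-1.
Definition kappa_r := sigma_r + x * y^-1 * x * y^-1 * x^-1.

(* [Re n] and [Ro n] will be R_(2n) and R_(2n+1); [Re 0] is the value of R_0 forced by the first
   relation at n = 1. *)
Fixpoint Re (n : nat) : D :=
  match n with
  | 0 => y * x * y^-1 * x^-1 * y^-1 + y * x * y^-1 * y^-1
  | 1 => y
  | (m.+1 as n').+1 => kappa * Re n' - comm * Re m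
  end.

Definition Ro (n : nat) : D := Re n.+1 * comm * Re n - 1.

Local Ltac laurent :=
  rewrite ?/comm ?/comm_inv ?/kappa ?/kappa_l ?/lead ?/sigma ?/lead_r ?/kappa_r ?/sigma_r;
  free_group_ring x y xu yu.

Lemma Re_rec n : Re n.+2 = kappa * Re n.+1 - comm * Re n.
Proof. by []. Qed.

Lemma Re_rec_right n : Re n.+2 * comm = Re n.+1 * kappa - Re n.
Proof.
pose d k := Re k.+2 * comm - Re k.+1 * kappa + Re k.
have d_rec k : d k.+2 = kappa * d k.+1 - comm * d k by rewrite /d !Re_rec; laurent.
have d0 k : d k = 0 /\ d k.+1 = 0.
  elim: k => [|k [dk dk1]]; last by rewrite d_rec dk dk1 !mulr0 subrr.
  by split; rewrite /d /=; laurent.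
have [dn0 _] := d0 n.
by apply: (eq_by_difference _ dn0); rewrite /d; laurent.
Qed.

Lemma Re_comm n : Re n.+1 * comm * Re n - Re n * Re n.+1 = 1 - comm_inv.
Proof.
elim: n => [|n <-]; first by rewrite /=; laurent.
by rewrite Re_rec_right Re_rec; laurent.
Qed.

(* In each component the difference of the two sides is a combination of the recurrences, [Re_comm]
   and the identities at [n]. *)
Lemma Re_casorati n :
  Re n.+2 * comm * Re n = Re n.+1 * Re n.+1 + kappa /\
  Re n * Re n.+2 = Re n.+1 * comm * Re n.+1 + comm_inv * kappa * comm_inv.
Proof.
elim: n => [|n [cas cas']]; first by split; rewrite /=; laurent.
have q1 := Re_comm n.+1.
split.
  apply: (eq_by_difference (d :=
       (Re n.+3 - (kappa * Re n.+2 - comm * Re n.+1)) * comm * Re n.+1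
     + kappa * (Re n.+2 * comm * Re n.+1 - Re n.+1 * Re n.+2 - (1 - comm_inv))
     - (Re n.+2 - (kappa * Re n.+1 - comm * Re n)) * Re n.+2
     + comm * (Re n * Re n.+2 - (Re n.+1 * comm * Re n.+1 + comm_inv * kappa * comm_inv)))).
    laurent.
  by rewrite q1 cas' -!Re_rec !subrr !mulr0 !mul0r !addr0 subrr.
apply: (eq_by_difference (d :=
     Re n.+1 * (Re n.+3 * comm - (Re n.+2 * kappa - Re n.+1)) * comm_inv
   - (Re n.+2 * comm * Re n.+1 - Re n.+1 * Re n.+2 - (1 - comm_inv)) * kappa * comm_inv
   - Re n.+2 * comm * (Re n.+2 * comm - (Re n.+1 * kappa - Re n)) * comm_inv
   + (Re n.+2 * comm * Re n - (Re n.+1 * Re n.+1 + kappa)) * comm_inv)).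
  laurent.
by rewrite q1 cas -!Re_rec_right !subrr !(mulr0, mul0r) !subr0 addr0.
Qed.

Lemma Ro_rec n : Ro n.+1 * comm * Ro n = 1 + Re n.+1 ^+ 4.
Proof.
have [cas _] := Re_casorati n.
apply: (eq_by_difference (d :=
     (Re n.+2 * comm * Re n.+1 - Re n.+1 * Re n.+2 - (1 - comm_inv)) * comm * Ro n
   + Re n.+1 * Re n.+2 * comm * (Re n.+1 * comm * Re n - Re n * Re n.+1 - (1 - comm_inv))
   + Re n.+1 * (Re n.+2 * comm * Re n - (Re n.+1 * Re n.+1 + kappa)) * Re n.+1
   - Re n.+1 * (Re n.+2 - (kappa * Re n.+1 - comm * Re n)))).
  rewrite /Ro; laurent.
by rewrite !Re_comm cas -Re_rec !subrr !mulr0 !mul0r !addr0 subrr.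
Qed.

Definition Re_tail n := Re n.+1 - lead * Re n.
Definition Re_tail_r n := Re n.+1 - Re n * lead_r.
Definition Ro_tail n := Re_tail n * comm * Re n - 1.

Lemma Re_tail_rec n : Re_tail n.+1 = sigma * lead * Re n + kappa_l * Re_tail n.
Proof. by rewrite /Re_tail Re_rec; laurent. Qed.

Lemma Re_tail_r_rec n : Re_tail_r n.+1 = Re n * (lead_r * sigma_r) + Re_tail_r n * kappa_r.
Proof.
apply: (eq_by_difference (d := (Re n.+2 * comm - (Re n.+1 * kappa - Re n)) * comm_inv)).
  by rewrite /Re_tail_r; laurent.
by rewrite Re_rec_right subrr mul0r.
Qed.

Lemma Ro_tail_rec n : Ro_tail n.+1 =
  sigma * lead * Re n * comm * Re n * lead_r + sigma * lead * Re n * comm * Re_tail_r n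
  + sigma * lead_r + kappa_l * Ro_tail n * lead_r + kappa_l * Re_tail n * comm * Re_tail_r n.
Proof.
have Re_succ : Re n.+1 = Re n * lead_r + Re_tail_r n by rewrite /Re_tail_r; laurent.
by rewrite /Ro_tail Re_tail_rec Re_succ; laurent.
Qed.

Lemma Re_decomp n : Re n.+1 = lead * Re n + Re_tail n.
Proof. by rewrite /Re_tail; laurent. Qed.

Lemma Ro_decomp n : Ro n = lead * Re n * comm * Re n + Ro_tail n.
Proof. by rewrite /Ro /Ro_tail /Re_tail; laurent. Qed.

Local Ltac pos := rewrite ?/comm ?/kappa ?/kappa_l ?/lead ?/sigma ?/lead_r ?/kappa_r ?/sigma_r;
  repeat first [ assumption | apply: pos_laurentD | apply: pos_laurentM
               | exact: pos_laurent_x | exact: pos_laurent_y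
               | exact: pos_laurent_xV | exact: pos_laurent_yV ].

Lemma pos_laurent_Re_tails n : [/\ pos_laurent x y (Re n.+1), pos_laurent x y (Re_tail n.+1),
  pos_laurent x y (Re_tail_r n.+1) & pos_laurent x y (Ro_tail n.+1)].
Proof.
elim: n => [|n [Re_pos tail_pos tail_r_pos Ro_tail_pos]].
  have -> : Re_tail 1 = x * y^-1 * x^-1 + y^-1 * x^-1 by rewrite /Re_tail /=; laurent.
  have -> : Re_tail_r 1 = x * y^-1 * x^-1 + y^-1 * x^-1 by rewrite /Re_tail_r /=; laurent.
  have -> : Ro_tail 1 = x^-1 by rewrite /Ro_tail /Re_tail /=; laurent.
  by split; pos.
by split; [rewrite Re_decomp | rewrite Re_tail_rec | rewrite Re_tail_r_rec | rewrite Ro_tail_rec];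
  pos.
Qed.

Lemma pos_laurent_Re n : pos_laurent x y (Re n).
Proof. by case: n => [|n]; [rewrite /=; pos | case: (pos_laurent_Re_tails n)]. Qed.

Lemma Ro_0 : Ro 0 = y * x * y^-1.
Proof. by rewrite /Ro /=; laurent. Qed.

Lemma pos_laurent_Ro n : pos_laurent x y (Ro n).
Proof.
case: n => [|n]; first by rewrite Ro_0; pos.
have [_ _ _ Ro_tail_pos] := pos_laurent_Re_tails n.
have Re_pos := pos_laurent_Re n.+1.
by rewrite Ro_decomp; pos.
Qed.

End Recurrence.

Section Identification.
Variables (D : unitRingType) (x y : D) (R : int -> D).
Hypotheses (division : is_division_ring D) (embeds : free_group_ring_embeds x y).
Hypothesis R_even : forall n : int,
  R (2 * n) * (x * y * x^-1 * y^-1) * R (2 * n - 2) = 1 + R (2 * n - 1).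
Hypothesis R_odd : forall n : int,
  R (2 * n + 1) * (x * y * x^-1 * y^-1) * R (2 * n - 1) = 1 + R (2 * n) ^+ 4.
Hypotheses (R1 : R 1 = y * x * y^-1) (R2 : R 2 = y).

Lemma generators_unit : x \is a GRing.unit /\ y \is a GRing.unit.
Proof.
by split; apply: division; [exact: (eval_letter_neq0 embeds (false, false))
                          | exact: (eval_letter_neq0 embeds (true, false))].
Qed.

Lemma R_Re_Ro k : R (2 * k)%N = Re x y k /\ R (2 * k).+1 = Ro x y k.
Proof.
have [xu yu] := generators_unit.
have unit_of_pos a : pos_laurent x y a -> a \is a GRing.unit.
  by move=> a_pos; apply/division/(pos_laurent_neq0 embeds xu yu).
have comm_unit : comm x y \is a GRing.unit by rewrite !unitrMl ?unitrV.
have cancel_comm a b u : u \is a GRing.unit -> a * comm x y * u = b * comm x y * u -> a = b.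
  by move=> u_unit /(mulIr u_unit) /(mulIr comm_unit).
have Ro_succ k' : 1 + Ro x y k' = Re x y k'.+1 * comm x y * Re x y k' by rewrite addrC subrK.
elim: k => [|k [Re_k Ro_k]].
  have R1_Ro : R 1 = Ro x y 0 by rewrite R1 Ro_0.
  have yC_unit : y * comm x y \is a GRing.unit by rewrite unitrMr.
  split=> //; have := R_even 1.
  rewrite (_ : 2 * 1 = 2) // (_ : 2 - 2 = 0) // (_ : 2 - 1 = 1) // R2 R1_Ro Ro_succ.
  by move/(mulrI yC_unit).
have idx_m2 : 2 * (k.+1)%:Z - 2 = (2 * k)%N by lia.
have idx_m1 : 2 * (k.+1)%:Z - 1 = (2 * k).+1 by lia.
have idx_p1 : 2 * (k.+1)%:Z + 1 = (2 * k.+1).+1 by lia.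
have idx : 2 * (k.+1)%:Z = (2 * k.+1)%N by lia.
have Re_k1 : R (2 * k.+1)%N = Re x y k.+1.
  apply: (cancel_comm _ _ _ (unit_of_pos _ (pos_laurent_Re xu yu k))).
  rewrite -Ro_succ -Ro_k -Re_k; have := R_even k.+1.
  by rewrite idx_m2 idx_m1 idx.
split=> //; apply: (cancel_comm _ _ _ (unit_of_pos _ (pos_laurent_Ro xu yu k))).
rewrite Ro_rec // -Re_k1 -Ro_k; have := R_odd k.+1.
by rewrite idx_p1 idx_m1 idx.
Qed.

End Identification.

Theorem theorem4p12 (D : unitRingType) (x y : D) (R : int -> D) :
  is_division_ring D ->
  free_group_ring_embeds x y ->
  (forall n : int,
      R (2 * n) * (x * y * x^-1 * y^-1) * R (2 * n - 2) = 1 + R (2 * n - 1)) ->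
  (forall n : int,
      R (2 * n + 1) * (x * y * x^-1 * y^-1) * R (2 * n - 1) = 1 + R (2 * n) ^+ 4) ->
  R 1 = y * x * y^-1 ->
  R 2 = y ->
  forall n : nat, exists s : seq (nat * word), R n%:Z = eval_nlaurent x y s.
Proof.
move=> division embeds R_even R_odd R1 R2 n.
have [xu yu] := generators_unit division embeds.
have [Re_half Ro_half] := R_Re_Ro division embeds R_even R_odd R1 R2 n./2.
rewrite -[n]odd_double_half -mul2n; case: (odd n).
- by have [s [Ro_s _]] := pos_laurent_Ro xu yu n./2; exists s; rewrite add1n Ro_half.
- by have [s [Re_s _]] := pos_laurent_Re xu yu n./2; exists s; rewrite add0n Re_half.
Qed.
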